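(* Let $n\ge 1$ and $1\le p\le n$. The number $F(n;p)$ of $\alpha\in\mathcal{ORCT}_n$ with $h(\alpha)=p$ equals $2(n-p+1)\binom{n-1}{p-1}$ if $p>1$, and equals $n$ if $p=1$.
   Context: $X_n=\{1,2,\dots,n\}$ with its usual order; maps are written on the right ($x\alpha$). A map $\alpha:X_n\to X_n$ is order-preserving if $x\le y$ implies $x\alpha\le y\alpha$, order-reversing if $x\le y$ implies $x\alpha\ge y\alpha$, and a contraction if $|x\alpha-y\alpha|\le|x-y|$ for all $x,y$. $\mathcal{ORCT}_n$ is the set of all maps $X_n\to X_n$ (defined on all of $X_n$) that are contractions and are either order-preserving or order-reversing. Height $h(\alpha)=|\mathrm{Im}\,\alpha|$. *)

(* X_n = {1..n} is modelled by 'I_n = {0..n-1} (shift by one,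
   which preserves order and distances). Maps X_n -> X_n are {ffun 'I_n -> 'I_n}. *)
From mathcomp Require Import all_boot all_order.
Set Implicit Arguments. Unset Strict Implicit. Unset Printing Implicit Defensive.

Definition distn (a b : nat) : nat := (a - b) + (b - a).

Definition order_preserving n (f : {ffun 'I_n -> 'I_n}) : bool :=
  [forall x : 'I_n, forall y : 'I_n, ((x : nat) <= y)%N ==> (f x <= f y)%N].

Definition order_reversing n (f : {ffun 'I_n -> 'I_n}) : bool :=
  [forall x : 'I_n, forall y : 'I_n, ((x : nat) <= y)%N ==> (f y <= f x)%N].

Definition contraction n (f : {ffun 'I_n -> 'I_n}) : bool :=
  [forall x : 'I_n, forall y : 'I_n, (distn (f x) (f y) <= distn x y)%N].

Definition ORCT n : {set {ffun 'I_n -> 'I_n}} :=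
  [set f | contraction f && (order_preserving f || order_reversing f)].

Definition height n (f : {ffun 'I_n -> 'I_n}) : nat := #|[set f x | x : 'I_n]|.

Definition F n p : nat := #|[set f in ORCT n | height f == p]|.

(* We work on X_n = 'I_m.+1 (so n = m + 1).  An order-preserving contraction
   f rises by 0 or 1 at each step x -> x + 1, so it is a "staircase": it is
   determined by its starting value a = f 0 and by the set S of positions
   i < m at which it rises, namely  f x = a + #{i in S | i < x}.  Its image
   is the interval [a, a + |S|], so its height is |S| + 1, and conversely
   every pair (a, S) with a + |S| <= m gives such a map.  Hence there are
   (m - k + 1) * C(m, k) order-preserving contractions of height k + 1.
   Composing with the order reversal y |-> m - y is a height-preserving
   bijection between order-preserving and order-reversing contractions, and
   a map that is both is constant, i.e. has height 1.  Inclusion-exclusion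
   gives 2 (n - p + 1) C(n - 1, p - 1) for p > 1 and 2n - n = n for p = 1. *)

From mathcomp Require Import all_boot all_order.
From mathcomp Require Import zify.
Set Implicit Arguments. Unset Strict Implicit. Unset Printing Implicit Defensive.

Lemma card_interval N lo k : lo + k <= N.+1 ->
  #|[set y : 'I_N.+1 | lo <= y < lo + k]| = k.
Proof.
move=> fits.
have -> : [set y : 'I_N.+1 | lo <= y < lo + k] = [set inord (lo + i) | i : 'I_k].
  apply/setP => y; rewrite inE; apply/idP/imsetP.
    move=> /andP[lo_y y_hi].
    have off_lt : y - lo < k by lia.
    by exists (Ordinal off_lt) => //; apply: val_inj; rewrite /= inordK; lia.
  by move=> [i _ ->]; rewrite inordK; have := ltn_ord i; lia.
rewrite card_imset ?card_ord // => i j /(congr1 val) /=.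
have := ltn_ord i; have := ltn_ord j => lt_j lt_i.
rewrite !inordK; try lia.
by move=> /eqP; rewrite eqn_add2l => /eqP eq_ij; apply: val_inj.
Qed.

Section StepCount.

Variable m : nat.
Implicit Types (S : {set 'I_m}) (x y : nat).

Definition in_steps S (j : nat) : bool := [exists i in S, (i : nat) == j].

Definition count_below S x : nat := \sum_(0 <= j < x) in_steps S j.

Lemma in_steps_ord S (i : 'I_m) : in_steps S i = (i \in S).
Proof.
apply/existsP/idP => [[j /andP[jS /eqP ji]]|iS].
  by have -> : i = j by apply: val_inj.
by exists i; rewrite iS eqxx.
Qed.

Lemma count_below0 S : count_below S 0 = 0.
Proof. by rewrite /count_below big_geq. Qed.

Lemma count_belowS S x : count_below S x.+1 = count_below S x + in_steps S x.
Proof. by rewrite /count_below big_nat_recr. Qed.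

Lemma count_below_mono S x y : x <= y ->
  count_below S x <= count_below S y <= count_below S x + (y - x).
Proof.
move=> /subnKC <-; rewrite addKn; elim: (y - x) => [|d IH].
  by rewrite !addn0 leqnn.
rewrite addnS count_belowS; case: (in_steps S (x + d)) => /=; lia.
Qed.

Lemma count_below_all S : count_below S m = #|S|.
Proof.
rewrite /count_below big_mkord.
rewrite (eq_bigr (fun i : 'I_m => if i \in S then 1 else 0)); last first.
  by move=> i _; rewrite in_steps_ord; case: (i \in S).
by rewrite -big_mkcond /= sum1_card.
Qed.

Lemma count_below_le_card S x : x <= m -> count_below S x <= #|S|.
Proof. by move=> /(count_below_mono S) /andP[]; rewrite count_below_all. Qed.

Lemma count_below_ivt S u t :
  t <= count_below S u -> exists2 x, x <= u & count_below S x = t.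
Proof.
elim: u => [|u IH] t_le.
  by exists 0 => //; move: t_le; rewrite count_below0 leqn0 => /eqP ->.
case: (leqP t (count_below S u)) => [/IH [x x_le <-]|lt_t].
  by exists x => //; apply: leqW.
exists u.+1 => //; move: t_le lt_t; rewrite count_belowS; lia.
Qed.

End StepCount.

Section Staircases.

Variable m : nat.
Implicit Types f : {ffun 'I_m.+1 -> 'I_m.+1}.

Definition staircase (aS : 'I_m.+1 * {set 'I_m}) : {ffun 'I_m.+1 -> 'I_m.+1} :=
  [ffun x : 'I_m.+1 => inord (aS.1 + count_below aS.2 x)].

Definition stair_params (k : nat) : {set 'I_m.+1 * {set 'I_m}} :=
  [set aS : 'I_m.+1 * {set 'I_m} | (aS.1 + k <= m) && (#|aS.2| == k)].

Section OneStaircase.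

Variable aS : 'I_m.+1 * {set 'I_m}.
Hypothesis fits : aS.1 + #|aS.2| <= m.

Lemma staircaseE (x : 'I_m.+1) : (staircase aS x : nat) = aS.1 + count_below aS.2 x.
Proof.
rewrite ffunE inordK //.
by have := count_below_le_card aS.2 (ltnSE (ltn_ord x)); lia.
Qed.

Lemma staircase_contraction : contraction (staircase aS).
Proof.
apply/forallP => x; apply/forallP => y; rewrite !staircaseE /distn.
case: (leqP x y) => [le_xy|/ltnW le_yx].
  by have := count_below_mono aS.2 le_xy; lia.
by have := count_below_mono aS.2 le_yx; lia.
Qed.

Lemma staircase_order_preserving : order_preserving (staircase aS).
Proof.
apply/forallP => x; apply/forallP => y; apply/implyP => le_xy.
by rewrite !staircaseE; have := count_below_mono aS.2 le_xy; lia.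
Qed.

(* The image of a staircase is the interval [a, a + |S|]. *)
Lemma staircase_height : height (staircase aS) = #|aS.2|.+1.
Proof.
rewrite /height -[#|aS.2|.+1](@card_interval m aS.1); last lia.
apply: eq_card => y; rewrite inE; apply/imsetP/idP.
  move=> [x _ ->]; rewrite staircaseE.
  by have := count_below_le_card aS.2 (ltnSE (ltn_ord x)); lia.
move=> /andP[lo_y y_hi].
have reach : y - aS.1 <= count_below aS.2 m by rewrite count_below_all; lia.
have [x x_le cnt_x] := count_below_ivt reach.
by exists (inord x) => //; apply: val_inj; rewrite /= staircaseE inordK; lia.
Qed.

End OneStaircase.

(* Distinct admissible parameters give distinct staircases: the start is
   f 0 and the rises of f are the positions where the count increases. *)
Lemma staircase_inj k : {in stair_params k &, injective staircase}.
Proof.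
move=> [a S] [a' S']; rewrite !inE /= => /andP[fit /eqP cardS] /andP[fit' /eqP cardS'] E.
have same_val (x : 'I_m.+1) : a + count_below S x = a' + count_below S' x.
  rewrite -(@staircaseE (a, S)) /=; last lia.
  by rewrite E staircaseE //=; lia.
have a_eq : a = a'.
  by apply: val_inj; have := same_val ord0; rewrite /= !count_below0 !addn0.
subst a'; congr (_, _).
have same_count x : x <= m -> count_below S x = count_below S' x.
  move=> le_xm; have := same_val (inord x); rewrite inordK; last lia.
  by move=> /addnI.
apply/setP => i; rewrite -!in_steps_ord.
have := same_count i.+1 (ltn_ord i); rewrite !count_belowS same_count; last first.
  exact: ltnW.
by move=> /addnI; case: (in_steps S i); case: (in_steps S' i).
Qed.

Definition rises f : {set 'I_m} := [set i : 'I_m | f (inord i.+1) != f (inord i)].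

Section OrderPreservingContraction.

Variable f : {ffun 'I_m.+1 -> 'I_m.+1}.
Hypotheses (f_contr : contraction f) (f_op : order_preserving f).

Let fn (j : nat) : nat := f (inord j).

Lemma op_contraction_step j : j < m -> fn j <= fn j.+1 <= fn j + 1.
Proof.
move=> lt_jm.
have /implyP := forallP (forallP f_op (inord j)) (inord j.+1).
rewrite !inordK; try lia => /(_ (leqnSn j)) mono.
have := forallP (forallP f_contr (inord j)) (inord j.+1).
by rewrite /distn !inordK; try lia; rewrite /fn; lia.
Qed.

Lemma op_contraction_count x : x <= m -> fn x = f ord0 + count_below (rises f) x.
Proof.
have fn0 : fn 0 = f ord0.
  by rewrite /fn; congr (nat_of_ord (f _)); apply: val_inj; rewrite /= inordK.
elim: x => [|x IH] le_xm; first by rewrite count_below0 addn0.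
rewrite count_belowS addnA -IH; last lia.
rewrite -[x]/(Ordinal le_xm : nat) in_steps_ord inE /=.
have := op_contraction_step le_xm; rewrite /fn.
case: eqP => [->|/eqP ne] /=; first lia.
have ne_nat : (f (inord x.+1) : nat) != f (inord x) by [].
lia.
Qed.

Lemma op_contraction_staircase :
  (f ord0 : nat) + #|rises f| <= m /\ f = staircase (f ord0, rises f).
Proof.
have fits : (f ord0 : nat) + #|rises f| <= m.
  rewrite -count_below_all -op_contraction_count // /fn.
  by have := ltn_ord (f (inord m)); lia.
split=> //; apply/ffunP => x; apply: val_inj => /=; rewrite staircaseE //=.
by rewrite -op_contraction_count /fn ?inord_val //; have := ltn_ord x; lia.
Qed.

End OrderPreservingContraction.

Definition OP_height p : {set {ffun 'I_m.+1 -> 'I_m.+1}} :=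
  [set f | [&& contraction f, order_preserving f & height f == p]].

Lemma OP_height_staircases k : OP_height k.+1 = staircase @: stair_params k.
Proof.
apply/setP => f; rewrite inE; apply/idP/imsetP.
  move=> /and3P[f_contr f_op /eqP f_height].
  have [fits E] := op_contraction_staircase f_contr f_op.
  exists (f ord0, rises f) => //.
  move: f_height; rewrite {1}E staircase_height // => -[card_rises].
  by rewrite inE /= card_rises eqxx andbT -card_rises.
move=> [aS]; rewrite inE => /andP[fit /eqP cardS] ->.
have fits : aS.1 + #|aS.2| <= m by rewrite cardS.
by rewrite staircase_contraction // staircase_order_preserving // staircase_height // cardS eqxx.
Qed.

Lemma card_OP_height k : k <= m -> #|OP_height k.+1| = (m - k + 1) * 'C(m, k).
Proof.
move=> le_km; rewrite OP_height_staircases card_in_imset; last exact: staircase_inj.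
have -> : stair_params k = setX [set a : 'I_m.+1 | 0 <= a < 0 + (m - k + 1)]
                                [set S : {set 'I_m} | #|S| == k].
  by apply/setP => -[a S]; rewrite !inE /=; congr (_ && _); apply/idP/idP; lia.
by rewrite cardsX card_interval ?card_draws ?card_ord //; lia.
Qed.

End Staircases.

Section Reversal.

Variable n : nat.
Implicit Types f : {ffun 'I_n -> 'I_n}.

Definition reverse f : {ffun 'I_n -> 'I_n} := [ffun x => rev_ord (f x)].

Lemma reverseK : involutive reverse.
Proof. by move=> f; apply/ffunP => x; rewrite !ffunE rev_ordK. Qed.

Lemma reverse_contraction f : contraction (reverse f) = contraction f.
Proof.
apply: eq_forallb => x; apply: eq_forallb => y; rewrite !ffunE /= /distn.
have := ltn_ord (f x); have := ltn_ord (f y) => lt_fy lt_fx.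
by congr (_ <= _); lia.
Qed.

Lemma reverse_order_reversing f : order_reversing (reverse f) = order_preserving f.
Proof.
apply: eq_forallb => x; apply: eq_forallb => y; rewrite !ffunE /=.
have := ltn_ord (f x); have := ltn_ord (f y) => lt_fy lt_fx.
by congr (_ ==> _); apply/idP/idP; lia.
Qed.

Lemma reverse_height f : height (reverse f) = height f.
Proof.
rewrite /height -[RHS](card_imset _ (@rev_ord_inj n)) -imset_comp.
by rewrite (eq_imset _ (fun x => ffunE _ x)).
Qed.

Definition OR_height p : {set {ffun 'I_n -> 'I_n}} :=
  [set f | [&& contraction f, order_reversing f & height f == p]].

End Reversal.

(* Reversal maps OP_height p bijectively onto OR_height p. *)
Lemma card_OR_height m p : #|OR_height m.+1 p| = #|OP_height m p|.
Proof.
rewrite -[RHS](card_imset _ (can_inj (@reverseK m.+1))).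
apply: eq_card => f; rewrite inE; apply/idP/imsetP.
  move=> f_OR; exists (reverse f); last by rewrite reverseK.
  by rewrite inE -reverse_contraction -reverse_order_reversing reverse_height reverseK.
move=> [g]; rewrite inE => g_OP ->.
by rewrite reverse_contraction reverse_order_reversing reverse_height.
Qed.

Lemma monotone_both_height m (f : {ffun 'I_m.+1 -> 'I_m.+1}) :
  order_preserving f -> order_reversing f -> height f = 1.
Proof.
move=> /forallP f_op /forallP f_or; rewrite /height -(cards1 (f ord0)).
apply: eq_card => y; rewrite inE; apply/imsetP/eqP => [[x _ ->]|->].
  apply: val_inj; apply/eqP; rewrite eqn_leq.
  by rewrite (implyP (forallP (f_or ord0) x)) ?(implyP (forallP (f_op ord0) x)).
by exists ord0.
Qed.

Lemma height1_monotone_both n (f : {ffun 'I_n -> 'I_n}) :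
  height f = 1 -> order_preserving f && order_reversing f.
Proof.
move=> /eqP /cards1P [y img_y].
have f_const x : f x = y by apply/set1P; rewrite -img_y; apply: imset_f.
by apply/andP; split; apply/forallP => x; apply/forallP => z; rewrite !f_const leqnn implybT.
Qed.

Theorem corollary3p4 (n p : nat) (hn : 1 <= n) (hp1 : 1 <= p) (hpn : p <= n) :
  F n p = (if 1 < p then 2 * (n - p + 1) * 'C(n - 1, p - 1) else n).
Proof.
case: n hn hpn => [//|m] _; case: p hp1 => [//|k] _ le_km.
have split_ORCT : [set f in ORCT m.+1 | height f == k.+1] =
                  OP_height m k.+1 :|: OR_height m.+1 k.+1.
  apply/setP => f; rewrite !inE.
  by case: (height f == k.+1); rewrite ?andbT ?andbF // andb_orr.
rewrite /F split_ORCT cardsU card_OR_height card_OP_height // subSS subn1 /=.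
case: k le_km {split_ORCT} => [|k] le_km /=.
- (* height 1: the constant maps are counted twice *)
  have -> : OP_height m 1 :&: OR_height m.+1 1 = OP_height m 1.
    apply/setP => f; rewrite !inE.
    case: (boolP (height f == 1)) => [/eqP /height1_monotone_both /andP[-> ->]|];
      by rewrite ?andbT ?andbF ?andbb.
  by rewrite card_OP_height // bin0 subn0 muln1 addn1; lia.
- (* height > 1: no map is monotone both ways *)
  have -> : OP_height m k.+2 :&: OR_height m.+1 k.+2 = set0.
    apply/setP => f; rewrite !inE.
    apply/negP => /andP[/and3P[_ f_op _] /and3P[_ f_or /eqP f_height]].
    by move: f_height; rewrite monotone_both_height.
  by rewrite cards0 subn0 -mulnA mul2n -addnn.
Qed.
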